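(* Let $G$ be a cubic graph with $fn(G)=2$, and let $(G,o)$ and $(G,o')$ be two orientations of $G$ such that every edge of $G$ is deletable in $(G,o)$ or in $(G,o')$. Then: 1. every vertex has at least one incoming and at least one outgoing edge in $(G,o')$; 2. if $uv\notin D(G,o)$, then the two edges incident with $u$ other than $uv$ are oriented one into $u$ and one out of $u$ in $(G,o')$; 3. if $uv,vw\notin D(G,o)$ (with $u\neq w$), then in $(G,o')$ these edges are oriented either as $u\to v$, $w\to v$ or as $v\to u$, $v\to w$.
   Context: An orientation is strong if for every ordered pair of distinct vertices $u,v$ there is a directed $uv$-path. An edge $e$ is deletable in an orientation $(G,o)$ if the restriction of $o$ to $E(G)\setminus\{e\}$ is a strong orientation of $G-e$. $D(G,o)$ denotes the set of edges deletable in $(G,o)$. For a $3$-edge-connected graph $G$, $fn(G)$ is the minimum number $k$ such that $G$ admits $k$ orientations with every edge deletable in at least one of them. *)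

(* Finite multigraphs: vertex type V, edge type E (both finite),
   and [ends e = (x, y)] gives the two endpoints of edge e (parallel edges allowed). *)
From mathcomp Require Import all_boot.
Set Implicit Arguments. Unset Strict Implicit. Unset Printing Implicit Defensive.

Section Graphs.
Variables (V E : finType) (ends : E -> V * V).

Definition joins (e : E) (a b : V) : Prop := ends e = (a, b) \/ ends e = (b, a).

Definition incident (e : E) (v : V) : bool := ((ends e).1 == v) || ((ends e).2 == v).

(* cubic: every vertex has degree 3 (a loop would count twice) *)
Definition cubic : Prop :=
  forall v : V, #|[set e | (ends e).1 == v]| + #|[set e | (ends e).2 == v]| = 3.

Definition uadj (F : {set E}) : rel V := fun x y =>
  [exists e, (e \notin F) &&
     ((((ends e).1 == x) && ((ends e).2 == y)) || (((ends e).2 == x) && ((ends e).1 == y)))].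

Definition connected_minus (F : {set E}) : Prop := forall u v : V, connect (uadj F) u v.

Definition three_edge_connected : Prop :=
  forall F : {set E}, #|F| <= 2 -> connected_minus F.

(* An orientation: o e = true orients e from (ends e).1 to (ends e).2, else reversed. *)
Definition orientation := E -> bool.

Definition arc_tail (o : orientation) (e : E) : V := if o e then (ends e).1 else (ends e).2.
Definition arc_head (o : orientation) (e : E) : V := if o e then (ends e).2 else (ends e).1.

Definition darc (o : orientation) (F : {set E}) : rel V := fun x y =>
  [exists e, (e \notin F) && (arc_tail o e == x) && (arc_head o e == y)].

Definition strong_minus (o : orientation) (F : {set E}) : bool :=
  [forall u, forall v, (u != v) ==> connect (darc o F) u v].

Definition deletable (o : orientation) (e : E) : bool := strong_minus o [set e].

Definition Dset (o : orientation) : {set E} := [set e | deletable o e].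

Definition has_cover (k : nat) : Prop :=
  exists os : 'I_k -> orientation, forall e : E, exists i : 'I_k, e \in Dset (os i).

(* fn(G) = k  (fn is defined for 3-edge-connected graphs; k is the minimum) *)
Definition fn_is (k : nat) : Prop :=
  three_edge_connected /\ has_cover k /\ (forall j, j < k -> ~ has_cover j).

End Graphs.

From mathcomp Require Import all_boot.
Set Implicit Arguments. Unset Strict Implicit. Unset Printing Implicit Defensive.

(* The three claims only need degree counting at a single vertex.
   A cubic graph has at least two vertices, so in a strong orientation of
   G - F every vertex has an in-arc and an out-arc outside F; and a vertex of
   a cubic graph meets at most three edges, a loop taking two of these slots.
   Together these give the key local fact (no_mixed_pair): if two non-loop
   edges at v are oriented one into v and one out of v, they are not both
   deletable, since the in-arc surviving the deletion of the first and the
   out-arc surviving the deletion of the second would make a fourth edge at v.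
   The theorem follows: as fn(G) = 2, o alone is not a cover, so o' has a
   deletable edge, giving (1); an edge outside D(G,o) is deletable in o', so
   at its end u the two remaining edges supply the in- and out-arc, giving
   (2); and (3) is no_mixed_pair applied at v in o'. *)

Section Orientations.
Variables (V E : finType) (ends : E -> V * V).

Lemma head_incident (o : orientation E) e x : arc_head ends o e = x -> incident ends e x.
Proof. by rewrite /arc_head /incident => <-; case: (o e); rewrite eqxx ?orbT. Qed.

Lemma tail_incident (o : orientation E) e x : arc_tail ends o e = x -> incident ends e x.
Proof. by rewrite /arc_tail /incident => <-; case: (o e); rewrite eqxx ?orbT. Qed.

Lemma joins_incident e a b : joins ends e a b -> incident ends e a.
Proof. by rewrite /incident; case=> ->; rewrite eqxx ?orbT. Qed.

Lemma arc_loop (o : orientation E) e x :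
  arc_head ends o e = x -> arc_tail ends o e = x -> (ends e).1 = x /\ (ends e).2 = x.
Proof. by rewrite /arc_head /arc_tail; case: (o e) => -> ->. Qed.

Lemma joins_arc (o : orientation E) e a b : joins ends e a b ->
  (arc_tail ends o e = a /\ arc_head ends o e = b) \/
  (arc_tail ends o e = b /\ arc_head ends o e = a).
Proof. by case=> H; rewrite /arc_tail /arc_head H /=; case: (o e); auto. Qed.

(* If G - F is strongly oriented and has a second vertex y, then x has an
   in-arc (last arc of a path from y) and an out-arc (first arc of a path to y). *)
Lemma strong_in_out_arcs (o : orientation E) F x y :
  strong_minus ends o F -> y != x ->
  (exists e, e \notin F /\ arc_head ends o e = x) /\
  (exists e, e \notin F /\ arc_tail ends o e = x).
Proof.
move=> Hs yx.
have path_xy : connect (darc ends o F) x y.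
  by move/forallP/(_ x)/forallP/(_ y)/implyP: Hs; apply; rewrite eq_sym.
have path_yx : connect (darc ends o F) y x.
  by move/forallP/(_ y)/forallP/(_ x)/implyP: Hs; apply.
split.
- case/connectP: path_yx => p; case/lastP: p => [/= _ eyx|q z].
    by rewrite eyx eqxx in yx.
  rewrite rcons_path last_rcons => /andP [_ /existsP [e /andP [/andP [eF _] /eqP he]]] ez.
  by exists e; rewrite he ez.
- case/connectP: path_xy => [[/= _ exy|z q]]; first by rewrite exy eqxx in yx.
  by case/andP => /existsP [e /andP [/andP [eF /eqP te] _]] _ _; exists e.
Qed.

End Orientations.

Section CubicGraphs.
Variables (V E : finType) (ends : E -> V * V).
Hypothesis cubicG : cubic ends.

(* The loops at x; each of them occupies two of the three edge slots at x. *)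
Definition loops_at (x : V) : {set E} := [set e | ((ends e).1 == x) && ((ends e).2 == x)].

Lemma incident_edges_bound x (s : seq E) :
  uniq s -> all (incident ends ^~ x) s -> size s + #|loops_at x| <= 3.
Proof.
move=> uniq_s inc_s; rewrite -(cubicG x) -cardsUI.
have -> : loops_at x = [set e | (ends e).1 == x] :&: [set e | (ends e).2 == x].
  by apply/setP => e; rewrite !inE.
rewrite leq_add2r -(card_uniqP uniq_s); apply: subset_leq_card.
by apply/subsetP => e /(allP inc_s); rewrite !inE /incident.
Qed.

Lemma no_four_edges x a b c d : uniq [:: a; b; c; d] ->
  incident ends a x -> incident ends b x -> incident ends c x -> incident ends d x -> False.
Proof.
move=> uniq_s ia ib ic id.
have inc_s : all (incident ends ^~ x) [:: a; b; c; d] by rewrite /= ia ib ic id.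
by have := incident_edges_bound uniq_s inc_s; rewrite ltnNge leq_addr.
Qed.

Lemma no_loop_and_two_edges x a b c : uniq [:: a; b; c] ->
  (ends a).1 = x -> (ends a).2 = x -> incident ends b x -> incident ends c x -> False.
Proof.
move=> uniq_s a1 a2 ib ic.
have inc_s : all (incident ends ^~ x) [:: a; b; c] by rewrite /= ib ic /incident a1 eqxx.
have : 0 < #|loops_at x| by apply/card_gt0P; exists a; rewrite inE a1 a2 eqxx.
by have := incident_edges_bound uniq_s inc_s; case: #|_|.
Qed.

(* The degree sum of a one-vertex graph would be even, so there is a second vertex. *)
Lemma exists_other_vertex (x : V) : exists y, y != x.
Proof.
case: (pickP (fun y => y != x)) => [y yx|none]; first by exists y.
have all_x y : y == x by apply/negbFE; exact: none.
have := cubicG x.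
have -> : [set e | (ends e).2 == x] = [set e | (ends e).1 == x].
  by apply/setP => e; rewrite !inE !all_x.
by move/(congr1 odd); rewrite oddD; case: odd.
Qed.

Lemma in_out_arcs (o : orientation E) F x : strong_minus ends o F ->
  (exists e, e \notin F /\ arc_head ends o e = x) /\
  (exists e, e \notin F /\ arc_tail ends o e = x).
Proof. by move=> Hs; have [y yx] := exists_other_vertex x; exact: strong_in_out_arcs Hs yx. Qed.

Lemma no_mixed_pair (o : orientation E) v e1 e2 :
  deletable ends o e1 -> deletable ends o e2 ->
  arc_head ends o e1 = v -> arc_tail ends o e1 != v ->
  arc_tail ends o e2 = v -> arc_head ends o e2 != v -> False.
Proof.
move=> del1 del2 h1 t1 t2 h2.
have [[a [aF ha]] _] := in_out_arcs v del1.
have [_ [d [dF td]]] := in_out_arcs v del2.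
rewrite in_set1 in aF; rewrite in_set1 in dF.
have ae2 : a != e2 by apply: contraNneq h2 => <-; rewrite ha.
have de1 : d != e1 by apply: contraNneq t1 => <-; rewrite td.
have e12 : e1 != e2 by apply: contraNneq h2 => <-; rewrite h1.
have [ad|ad] := eqVneq a d.
- have [a1 a2] := arc_loop ha (etrans (congr1 _ ad) td).
  apply: (no_loop_and_two_edges (b := e1) (c := e2) _ a1 a2 (head_incident h1) (tail_incident t2)).
  by rewrite /= !inE negb_or aF ae2 e12.
- apply: (no_four_edges (a := a) (b := d) (c := e1) (d := e2) _ (head_incident ha)
    (tail_incident td) (head_incident h1) (tail_incident t2)).
  by rewrite /= !inE !negb_or ad aF ae2 de1 dF e12.
Qed.

Lemma in_out_everywhere (o : orientation E) e0 : deletable ends o e0 ->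
  forall v, (exists e, arc_head ends o e = v) /\ (exists e, arc_tail ends o e = v).
Proof.
move=> del0 v; have [[a [_ ha]] [b [_ tb]]] := in_out_arcs v del0.
by split; [exists a | exists b].
Qed.

Lemma other_edges_split (o : orientation E) e u f g :
  deletable ends o e -> incident ends e u ->
  f != e -> g != e -> f != g -> incident ends f u -> incident ends g u ->
  (arc_head ends o f = u /\ arc_tail ends o g = u) \/
  (arc_tail ends o f = u /\ arc_head ends o g = u).
Proof.
move=> del ei fe ge fg fi gi.
have [[a [aF ha]] [b [bF tb]]] := in_out_arcs u del.
rewrite in_set1 in aF; rewrite in_set1 in bF.
have edges_at_u x : x != e -> incident ends x u -> (x == f) || (x == g).
  move=> xe xi; apply/negPn/negP; rewrite negb_or => /andP [xf xg].
  apply: (no_four_edges (a := x) (b := e) (c := f) (d := g) _ xi ei fi gi).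
  by rewrite /= !inE !negb_or xe xf xg eq_sym fe eq_sym ge fg.
have no_loop x : (x == f) || (x == g) -> arc_head ends o x = u -> arc_tail ends o x != u.
  move=> /orP [] /eqP -> h; apply/eqP => t; have [l1 l2] := arc_loop h t.
    apply: (no_loop_and_two_edges (b := e) (c := g) _ l1 l2 ei gi).
    by rewrite /= !inE !negb_or fe fg eq_sym ge.
  apply: (no_loop_and_two_edges (b := e) (c := f) _ l1 l2 ei fi).
  by rewrite /= !inE !negb_or ge eq_sym fg eq_sym fe.
have Ha := edges_at_u a aF (head_incident ha).
have Hb := edges_at_u b bF (tail_incident tb).
have ab : a != b by apply: contraTneq (no_loop a Ha ha) => ->; rewrite tb eqxx.
case/orP: Ha ha ab => /eqP -> ha; case/orP: Hb tb => /eqP -> tb; rewrite ?eqxx // => _.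
- by left.
- by right.
Qed.

Lemma consecutive_pair_aligned (o : orientation E) e1 e2 u v w :
  deletable ends o e1 -> deletable ends o e2 -> joins ends e1 u v -> joins ends e2 v w ->
  (arc_tail ends o e1 = u /\ arc_head ends o e1 = v /\
   arc_tail ends o e2 = w /\ arc_head ends o e2 = v) \/
  (arc_tail ends o e1 = v /\ arc_head ends o e1 = u /\
   arc_tail ends o e2 = v /\ arc_head ends o e2 = w).
Proof.
move=> del1 del2 J1 J2.
have [[t1 h1]|[t1 h1]] := joins_arc o J1;
  have [[t2 h2]|[t2 h2]] := joins_arc o J2; rewrite t1 h1 t2 h2; [| by left | by right |].
- have [<-|uv] := eqVneq u v; first by right.
  have [<-|vw] := eqVneq v w; first by left.
  by case: (no_mixed_pair del1 del2 h1 _ t2 _); rewrite ?t1 ?h2 // eq_sym.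
- have [<-|uv] := eqVneq u v; first by left.
  have [<-|vw] := eqVneq v w; first by right.
  by case: (no_mixed_pair del2 del1 h2 _ t1 _); rewrite ?t2 ?h1 // eq_sym.
Qed.

End CubicGraphs.

Theorem mainTheorem12 (V E : finType) (ends : E -> V * V)
  (o o' : orientation E) :
  cubic ends -> fn_is ends 2 ->
  (forall e : E, e \in Dset ends o \/ e \in Dset ends o') ->
  (* 1 *)
  (forall v : V, (exists e, arc_head ends o' e = v) /\ (exists e, arc_tail ends o' e = v)) /\
  (* 2 *)
  (forall (e : E) (u v : V), joins ends e u v -> e \notin Dset ends o ->
     forall f g : E, f != e -> g != e -> f != g -> incident ends f u -> incident ends g u ->
       (arc_head ends o' f = u /\ arc_tail ends o' g = u) \/ (arc_tail ends o' f = u /\ arc_head ends o' g = u)) /\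
  (* 3 *)
  (forall (e1 e2 : E) (u v w : V), joins ends e1 u v -> joins ends e2 v w -> u != w ->
     e1 \notin Dset ends o -> e2 \notin Dset ends o ->
       (arc_tail ends o' e1 = u /\ arc_head ends o' e1 = v /\ arc_tail ends o' e2 = w /\ arc_head ends o' e2 = v) \/
       (arc_tail ends o' e1 = v /\ arc_head ends o' e1 = u /\ arc_tail ends o' e2 = v /\ arc_head ends o' e2 = w)).
Proof.
move=> cubicG [_ [_ no_smaller_cover]] cover.
have del' e : e \notin Dset ends o -> deletable ends o' e.
  by move=> eNo; case: (cover e) => //; [rewrite (negbTE eNo) | rewrite inE].
(* fn(G) > 1: o alone is not a cover, so some edge is deletable in o' only. *)
have [e0 del0] : exists e0, deletable ends o' e0.
  apply/existsP; apply: contraT => /existsPn none; case: (no_smaller_cover 1 isT).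
  exists (fun _ => o) => e; exists ord0.
  by case: (cover e) => //; rewrite inE (negbTE (none e)).
split; last split.
- exact: (in_out_everywhere cubicG del0).
- move=> e u v J eNo f g fe ge fg fi gi.
  exact: (other_edges_split cubicG (del' e eNo) (joins_incident J) fe ge fg fi gi).
- move=> e1 e2 u v w J1 J2 _ e1No e2No.
  exact: (consecutive_pair_aligned cubicG (del' e1 e1No) (del' e2 e2No) J1 J2).
Qed.
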